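(* For $n\ge1$, $\left|\Pi_n\wr C_2(1^11^2,1^12^2,1^22^1)\right|=2B(n)+n-1$, where $B(n)$ is the $n$th Bell number.
   Context: For $n\ge0$ let $[n]=\{1,\dots,n\}$. A $2$-colored set partition of $[n]$ is a set partition of $[n]$ together with an assignment of a color from $\{1,2\}$ to each element; $\Pi_n\wr C_2$ is the set of these. For a set $S$ of patterns, $\Pi_n\wr C_2(S)$ is the set of such colored partitions avoiding every pattern in $S$ in the pattern sense. For the patterns used here: $\sigma$ contains $1^11^2$ iff there are $i<j$ in the same block with $i$ colored $1$ and $j$ colored $2$; $1^12^2$ iff there are $i<j$ in different blocks with $i$ colored $1$ and $j$ colored $2$; $1^22^1$ iff there are $i<j$ in different blocks with $i$ colored $2$ and $j$ colored $1$. $B(n)$ is the number of set partitions of $[n]$. *)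

From mathcomp Require Import all_boot.
Set Implicit Arguments. Unset Strict Implicit. Unset Printing Implicit Defensive.

(* The ground set [n] = {1,...,n} is modelled by 'I_n = {0,...,n-1}
   (order-preserving shift by one). *)

Definition col1 : 'I_2 := @Ordinal 2 0 isT.
Definition col2 : 'I_2 := @Ordinal 2 1 isT.

Definition is_set_partition (n : nat) (P : {set {set 'I_n}}) : bool :=
  partition P [set: 'I_n].

Definition Bell (n : nat) : nat :=
  #|[set P : {set {set 'I_n}} | is_set_partition P]|.

Definition same_block (n : nat) (P : {set {set 'I_n}}) (i j : 'I_n) : bool :=
  [exists B in P, (i \in B) && (j \in B)].

Definition contains_11_12 n (P : {set {set 'I_n}}) (c : {ffun 'I_n -> 'I_2}) :=
  [exists i : 'I_n, exists j : 'I_n,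
     [&& i < j, same_block P i j, c i == col1 & c j == col2]].

Definition contains_11_22 n (P : {set {set 'I_n}}) (c : {ffun 'I_n -> 'I_2}) :=
  [exists i : 'I_n, exists j : 'I_n,
     [&& i < j, ~~ same_block P i j, c i == col1 & c j == col2]].

Definition contains_12_21 n (P : {set {set 'I_n}}) (c : {ffun 'I_n -> 'I_2}) :=
  [exists i : 'I_n, exists j : 'I_n,
     [&& i < j, ~~ same_block P i j, c i == col2 & c j == col1]].

Definition avoiders (n : nat) :
  {set {set {set 'I_n}} * {ffun 'I_n -> 'I_2}} :=
  [set x | [&& is_set_partition x.1,
              ~~ contains_11_12 x.1 x.2,
              ~~ contains_11_22 x.1 x.2 &
              ~~ contains_12_21 x.1 x.2]].

(* An avoiding coloring has no color 1 before a color 2, so it paints an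
   initial segment [0, k) with color 2 and the rest with color 1.  If
   0 < k < n, avoiding 1^2 2^1 puts every element in the block of 0 or of
   n - 1, and these two coincide, so the partition has one block.  Hence
   k = 0 and k = n contribute B(n) each and the n - 1 other values of k
   contribute one colored partition each. *)

From mathcomp Require Import all_boot zify.
Set Implicit Arguments. Unset Strict Implicit.

Lemma partition_set1T (T : finType) (x0 : T) :
  partition [set [set: T]] [set: T].
Proof.
rewrite /partition cover1 eqxx trivIset1 inE eq_sym /=.
by apply/set0Pn; exists x0.
Qed.

Lemma partition_one_block (T : finType) (P : {set {set T}}) (x0 : T) :
  partition P [set: T] -> (forall x, pblock P x = pblock P x0) ->
  P = [set [set: T]].
Proof.
case/and3P=> /eqP covP tP nP0 same.
have block0T : pblock P x0 = [set: T].
  by apply/setP=> x; rewrite inE -(same x) mem_pblock covP inE.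
have TP : [set: T] \in P by rewrite -block0T pblock_mem ?covP.
apply/setP=> B; rewrite inE; apply/idP/eqP=> [BP|->//].
have /set0Pn[x xB] : B != set0 by apply: contraNneq nP0 => <-.
by rewrite -(def_pblock tP BP xB) same block0T.
Qed.

Lemma same_blockE n (P : {set {set 'I_n}}) i j :
  is_set_partition P -> same_block P i j = (pblock P i == pblock P j).
Proof.
case/and3P=> /eqP covP tP _.
have iP : i \in cover P by rewrite covP inE.
rewrite eq_pblock //; apply/existsP/idP=> [[B /and3P[BP iB jB]]|jPi].
  by rewrite (def_pblock tP BP iB).
by exists (pblock P i); rewrite pblock_mem // mem_pblock iP.
Qed.

Definition prefix_coloring n (k : nat) : {ffun 'I_n -> 'I_2} :=
  [ffun i : 'I_n => if i < k then col2 else col1].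

Definition color2 n (c : {ffun 'I_n -> 'I_2}) : {set 'I_n} :=
  [set i | c i == col2].

Lemma card_color2_le n (c : {ffun 'I_n -> 'I_2}) : #|color2 c| <= n.
Proof. by rewrite -[X in _ <= X]card_ord max_card. Qed.

Lemma col1N (a : 'I_2) : (a == col1) = (a != col2).
Proof. by case: a => [[|[|]]]. Qed.

Lemma card_ord_ltn n k : k <= n -> #|[set i : 'I_n | i < k]| = k.
Proof.
move=> kn.
have -> : [set i : 'I_n | i < k] = [set widen_ord kn j | j in 'I_k].
  apply/setP=> i; rewrite inE; apply/idP/imsetP=> [ik|[j _ ->]].
    by exists (Ordinal ik) => //; apply/val_inj.
  by rewrite /= ltn_ord.
by rewrite card_imset ?card_ord // => a b /(congr1 val) /= /val_inj.
Qed.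

Lemma card_color2_prefix n k : k <= n -> #|color2 (prefix_coloring n k)| = k.
Proof.
move=> kn; rewrite -[RHS](card_ord_ltn kn); apply: eq_card => i.
by rewrite !inE ffunE; case: (i < k).
Qed.

Lemma downclosed_ordE n (A : {set 'I_n}) :
  (forall i j : 'I_n, j < i -> i \in A -> j \in A) ->
  A = [set i : 'I_n | i < #|A|].
Proof.
move=> downA; apply/setP=> i; rewrite inE; apply/idP/idP=> [iA|].
  have sub : [set j : 'I_n | j < i.+1] \subset A.
    apply/subsetP=> j; rewrite inE ltnS leq_eqVlt => /predU1P[/val_inj->//|].
    by move/downA; apply.
  by have := subset_leq_card sub; rewrite card_ord_ltn.
apply: contraLR; rewrite -leqNgt => iNA.
have sub : A \subset [set j : 'I_n | j < i].
  apply/subsetP=> j jA; rewrite inE ltnNge leq_eqVlt.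
  by apply: contra iNA => /predU1P[/val_inj->//|/downA]; apply.
by have := subset_leq_card sub; rewrite card_ord_ltn // ltnW.
Qed.

Lemma prefix_coloringE n (c : {ffun 'I_n -> 'I_2}) :
  (c == prefix_coloring n #|color2 c|) =
  ~~ [exists i : 'I_n, exists j : 'I_n, [&& i < j, c i == col1 & c j == col2]].
Proof.
apply/eqP/idP=> [cE|noPat].
  apply/existsPn=> i; apply/existsPn=> j; rewrite cE !ffunE.
  case: ltnP => [ij|//]; case: ifP => // ik; case: ifP => // jk.
  by rewrite (ltn_trans ij jk) in ik.
have downS : forall i j : 'I_n, j < i -> i \in color2 c -> j \in color2 c.
  move=> i j ji; rewrite !inE => ci; apply: contraR noPat => cj.
  by apply/existsP; exists j; apply/existsP; exists i; rewrite ji col1N cj ci.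
apply/ffunP=> i; have /setP/(_ i) := downclosed_ordE downS.
rewrite ffunE !inE => <-.
by case: eqP => // /eqP; rewrite -col1N => /eqP.
Qed.

Lemma contains_col1_col2 n (P : {set {set 'I_n}}) c :
  contains_11_12 P c || contains_11_22 P c =
  [exists i : 'I_n, exists j : 'I_n, [&& i < j, c i == col1 & c j == col2]].
Proof.
apply/orP/existsP=> [[]|[i /existsP[j /and3P[ij ci cj]]]].
- by case/existsP=> i /existsP[j /and4P[ij _ ci cj]]; exists i;
    apply/existsP; exists j; rewrite ij ci cj.
- by case/existsP=> i /existsP[j /and4P[ij _ ci cj]]; exists i;
    apply/existsP; exists j; rewrite ij ci cj.
case: (boolP (same_block P i j)) => sb; [left | right];
  by apply/existsP; exists i; apply/existsP; exists j; rewrite ij sb ci cj.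
Qed.

Lemma contains_12_21_prefix n (P : {set {set 'I_n}}) k :
  is_set_partition P -> k <= n ->
  contains_12_21 P (prefix_coloring n k) = [&& 0 < k, k < n & P != [set setT]].
Proof.
move=> pP kn; apply/idP/idP.
  case/existsP=> i /existsP[j /and4P[ij sb]]; rewrite !ffunE.
  case: ifP => // ik _; case: ifP => // /negbT; rewrite -leqNgt => kj _.
  have kn' : k < n by apply: leq_ltn_trans kj (ltn_ord j).
  rewrite (leq_ltn_trans (leq0n i) ik) kn' /=; apply: contraNneq sb => ->.
  by apply/existsP; exists setT; rewrite !inE eqxx.
case/and3P=> k0 kn' PnT; apply: contraR PnT => avoid.
have sameLR : forall i j : 'I_n, i < k -> k <= j -> pblock P i = pblock P j.
  move=> i j ik kj; apply/eqP; rewrite -same_blockE //.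
  apply: contraR avoid => sb; apply/existsP; exists i; apply/existsP; exists j.
  by rewrite sb (leq_trans ik kj) !ffunE ik ltnNge kj.
have n0 : 0 < n := leq_ltn_trans (leq0n k) kn'.
have n1 : n.-1 < n by rewrite ltn_predL.
pose a : 'I_n := Ordinal n0; pose b : 'I_n := Ordinal n1.
have kb : k <= b by rewrite /= -ltnS prednK.
apply/eqP; apply: (partition_one_block (x0 := a) pP) => x.
case: (ltnP x k) => [xk|kx]; last by rewrite (sameLR a x).
by rewrite (sameLR x b) // (sameLR a b).
Qed.

Definition avoids n (P : {set {set 'I_n}}) (c : {ffun 'I_n -> 'I_2}) :=
  [&& ~~ contains_11_12 P c, ~~ contains_11_22 P c & ~~ contains_12_21 P c].

Lemma avoidsE n (P : {set {set 'I_n}}) c : is_set_partition P ->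
  avoids P c = (c == prefix_coloring n #|color2 c|) &&
               [|| #|color2 c| == 0, #|color2 c| == n | P == [set setT]].
Proof.
move=> pP; rewrite /avoids andbA -negb_or contains_col1_col2 -prefix_coloringE.
case: eqP => //= cE.
rewrite [in LHS]cE contains_12_21_prefix ?card_color2_le //.
have := card_color2_le c; move: #|color2 c| => k kn; rewrite lt0n ltn_neqAle kn andbT.
by case: (k == 0); case: (k == n); case: (P == _).
Qed.

Definition avoiders_with n (k : nat) :
  {set {set {set 'I_n}} * {ffun 'I_n -> 'I_2}} :=
  [set x | [&& is_set_partition x.1, x.2 == prefix_coloring n k &
              [|| k == 0, k == n | x.1 == [set setT]]]].

Lemma mem_avoiders_with n (k : 'I_n.+1) x :
  (x \in avoiders n) && (inord #|color2 x.2| == k) = (x \in avoiders_with n k).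
Proof.
case: x => P c; rewrite !inE /=.
case: (boolP (is_set_partition P)) => //= pP.
have kn : k <= n by rewrite -ltnS.
have := avoidsE c pP; rewrite /avoids => ->.
case: (eqVneq c (prefix_coloring n k)) => [->|ck].
  by rewrite card_color2_prefix // eqxx inord_val eqxx andbT.
apply/negP=> /andP[/andP[/eqP cE _] /eqP ck2]; move/eqP: ck; apply.
by rewrite cE -ck2 inordK // ltnS card_color2_le.
Qed.

Lemma card_avoiders_with n k : 0 < n -> k <= n ->
  #|avoiders_with n k| = if (k == 0) || (k == n) then Bell n else 1.
Proof.
move=> n0 kn; case: ifP => kc.
  have -> : avoiders_with n k =
      [set (P, prefix_coloring n k) | P in [set P | is_set_partition P]].
    apply/setP=> -[P c]; rewrite !inE /= orbA kc andbT.
    apply/andP/imsetP=> [[pP /eqP->]|[Q]]; first by exists P; rewrite ?inE.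
    by rewrite inE => pQ [-> ->].
  by rewrite card_imset // => P Q [].
have -> : avoiders_with n k = [set ([set setT], prefix_coloring n k)].
  apply/setP=> -[P c]; rewrite !inE /= orbA kc /= xpair_eqE.
  apply/and3P/andP=> [[_ -> ->]//|[/eqP-> ->]]; split=> //.
  exact: (partition_set1T (Ordinal n0)).
by rewrite cards1.
Qed.

Lemma sum_if_ends n b :
  \sum_(k < n.+2) (if (k == 0 :> nat) || (k == n.+1 :> nat) then b else 1) =
  2 * b + n.
Proof.
rewrite big_ord_recl big_ord_recr /= /bump leq0n add1n eqxx.
rewrite (eq_bigr (fun _ => 1)) => [|i _]; last first.
  by rewrite /bump leq0n add1n eqSS ltn_eqF.
by rewrite sum1_card card_ord; lia.
Qed.

Theorem mainTheorem15 (n : nat) (hn : 1 <= n) :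
  #|avoiders n| = 2 * Bell n + n - 1.
Proof.
rewrite -sum1_card.
rewrite (partition_big (fun x => inord #|color2 x.2| : 'I_n.+1) predT) //=.
rewrite (eq_bigr (fun k : 'I_n.+1 =>
  if (k == 0 :> nat) || (k == n :> nat) then Bell n else 1)) => [|k _].
  by case: n hn => // m _; rewrite sum_if_ends; lia.
rewrite -card_avoiders_with // ?sum1_card; last by rewrite -ltnS.
by apply: eq_card => x; apply: mem_avoiders_with.
Qed.
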